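(* Let $w=w_1\cdots w_n$ be a word of length $n\ge 3$, let $d\ge 1$, and let $G_w$ be any $(n,d)$-grid satisfying the rules below. Let $p\in[n]^d$ be a counter-point with $\tau_1(p)=r$. Then the number of directions $v\in\{-1,0,1\}^d\setminus\{\vec 0\}$ such that $\{p,p+v,\dots,p+(n-1)v\}\subseteq[n]^d$ and $G_w(p)G_w(p+v)\cdots G_w(p+(n-1)v)$ equals $w$ or $w$ reversed (i.e. the number of lines with initial point $p$ that contain $w$) is at least $(1-2e^{-c/10000})2^{r-1}$. If moreover $w_i=w_{n-i+1}$ for all $i$, this number is at least $(1-2e^{-c/10000})2^{r}$.
   Context: Let $[n]=\{1,\dots,n\}$. For $p\in[n]^d$ and $i\in[n]$ let $\pi_i(p)=|\{j\in[d]:p_j=i\}|$, $\tau_i(p)=\pi_i(p)+\pi_{n-i+1}(p)$, and $\sigma(p)=\sum_{1\le i\le n/2}\pi_i(p)$. Set $c=\frac{3.9d}{n+2}$ and $k=\frac{2.3d}{n+2}$. A point $p\in[n]^d$ is a counter-point if $c<\tau_1(p)<1.1c$ and $\frac{0.99(d-\tau_1(p))}{n-2}\le\pi_i(p)\le\frac{1.01(d-\tau_1(p))}{n-2}$ for all $1<i<n$. An $(n,d)$-grid is a function $G:[n]^d\to\Sigma$ into a set of letters. The grid $G_w$ is required to satisfy: if $\sigma(p)$ is odd, then $G_w(p)=w_1$ when $p$ is a counter-point, and $G_w(p)=w_i$ when $\tau_1(p)\le c$ and there is a unique integer $i$ with $1<i\le\lceil n/2\rceil$ and $\tau_i(p)\ge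 k$; if $\sigma(p)$ is even, then $G_w(p)=w_n$ when $p$ is a counter-point, and $G_w(p)=w_{n-i+1}$ when $\tau_1(p)\le c$ and there is a unique integer $i$ with $1<i\le\lceil n/2\rceil$ and $\tau_i(p)\ge k$; all other points are assigned arbitrary letters. *)

From HB Require Import structures.
From mathcomp Require Import all_boot all_order all_algebra.
From mathcomp Require Import reals sequences exp.
Set Implicit Arguments. Unset Strict Implicit. Unset Printing Implicit Defensive.
Import Order.TTheory GRing.Theory Num.Theory.
Local Open Scope ring_scope.

Definition point (d : nat) := {ffun 'I_d -> int}.

Definition in_grid (n d : nat) (p : point d) : bool :=
  [forall j, (1 <= p j)%R && (p j <= n%:Z)%R].

Definition pi_ (d : nat) (i : nat) (p : point d) : nat :=
  #|[set j : 'I_d | p j == i%:Z]|.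
Definition tau_ (n d : nat) (i : nat) (p : point d) : nat :=
  (pi_ i p + pi_ (n - i + 1) p)%N.
Definition sigma_ (n d : nat) (p : point d) : nat :=
  (\sum_(1 <= i < (n./2).+1) pi_ i p)%N.

Definition cst (R : realType) (n d : nat) : R := (39%:R / 10%:R) * d%:R / (n + 2)%N%:R.
Definition kst (R : realType) (n d : nat) : R := (23%:R / 10%:R) * d%:R / (n + 2)%N%:R.

Definition counter_point (R : realType) (n d : nat) (p : point d) : Prop :=
  [/\ in_grid n p,
      cst R n d < (tau_ n 1 p)%:R,
      (tau_ n 1 p)%:R < (11%:R / 10%:R) * cst R n d &
      forall i : nat, (1 < i < n)%N ->
        (99%:R / 100%:R : R) * ((d%:R - (tau_ n 1 p)%:R) / (n - 2)%N%:R) <= (pi_ i p)%:R /\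
        (pi_ i p)%:R <= (101%:R / 100%:R : R) * ((d%:R - (tau_ n 1 p)%:R) / (n - 2)%N%:R)].

(* The letter w_i (1-indexed) of a word w; x0 is an irrelevant default. *)
Definition letter (S : Type) (x0 : S) (w : seq S) (i : nat) : S := nth x0 w i.-1.

Definition Gw_rules (R : realType) (S : Type) (x0 : S) (w : seq S) (n d : nat)
    (G : point d -> S) : Prop :=
  forall p : point d, in_grid n p ->
  [/\ (odd (sigma_ n p) -> counter_point R n p -> G p = letter x0 w 1),
      (odd (sigma_ n p) -> forall i : nat,
         (tau_ n 1 p)%:R <= cst R n d ->
         (1 < i <= uphalf n)%N -> kst R n d <= (tau_ n i p)%:R ->
         (forall j : nat, (1 < j <= uphalf n)%N -> kst R n d <= (tau_ n j p)%:R -> j = i) ->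
         G p = letter x0 w i),
      (~~ odd (sigma_ n p) -> counter_point R n p -> G p = letter x0 w n) &
      (~~ odd (sigma_ n p) -> forall i : nat,
         (tau_ n 1 p)%:R <= cst R n d ->
         (1 < i <= uphalf n)%N -> kst R n d <= (tau_ n i p)%:R ->
         (forall j : nat, (1 < j <= uphalf n)%N -> kst R n d <= (tau_ n j p)%:R -> j = i) ->
         G p = letter x0 w (n - i + 1)%N)].

(* Directions v in {-1,0,1}^d, encoded by 'I_3 with k |-> k - 1. *)
Definition dir (d : nat) := {ffun 'I_d -> 'I_3}.
Definition dirval (d : nat) (v : dir d) (j : 'I_d) : int := (v j)%:Z - 1.
Definition is_zero_dir (d : nat) (v : dir d) : bool := [forall j, dirval v j == 0].

Definition line_pt (d : nat) (p : point d) (v : dir d) (t : nat) : point d :=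
  [ffun j => p j + t%:Z * dirval v j].

Definition good_dirs (S : eqType) (n d : nat) (G : point d -> S) (w : seq S)
    (p : point d) : {set dir d} :=
  [set v : dir d | [&& ~~ is_zero_dir v,
     all (fun t => in_grid n (line_pt p v t)) (iota 0 n) &
     let u := [seq G (line_pt p v t) | t <- iota 0 n] in (u == w) || (u == rev w)]].

(* Let A be the set of coordinates where the counter-point p equals 1 or n,
   so #|A| = r.  For T a subset of A, move the coordinates of T inward (up
   from 1, down from n) and keep the others fixed: this gives a line
   q_0 = p, ..., q_(n-1) in the grid.  Its endpoints are counter-points, and
   if #|T| >= r/4, then at an interior point q_t the value tau_1 drops below c
   while tau_i reaches k for exactly one i <= n/2 (rounded up), namely
   i = min(t+1, n-t).  So the rules force G(q_t) to be w_(t+1) or w_(n-t)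
   according to the parity of sigma(q_t).  When #|T| is odd this parity
   flips exactly when t crosses the middle, so the line reads w or its
   reverse; when w is a palindrome every T works.  A Chernoff bound shows that
   at most (881/500)^r <= 2^r e^(-c/10000) subsets of A have fewer than r/4
   elements. *)

From HB Require Import structures.
From mathcomp Require Import all_boot all_order all_algebra.
From mathcomp Require Import reals sequences exp.
From mathcomp Require Import ring lra zify.
Import Order.TTheory GRing.Theory Num.Theory.
Local Open Scope ring_scope.
Set Implicit Arguments. Unset Strict Implicit. Unset Printing Implicit Defensive.

Section SubsetCounting.
Variables (R : realType) (T : finType).

Lemma sum_expr_card_sets (z : R) : \sum_(B : {set T}) z ^+ #|B| = (z + 1) ^+ #|T|.
Proof.
rewrite exprD1n (partition_big (fun B : {set T} => inord #|B| : 'I_#|T|.+1) xpredT) //=.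
apply: eq_bigr => k _.
have cardB_lt (B : {set T}) : (#|B| < #|T|.+1)%N by rewrite ltnS max_card.
rewrite (eq_bigr (fun _ => z ^+ k)); last by move=> B /eqP <-; rewrite inordK.
rewrite sumr_const -card_draws; congr (_ *+ _); apply: eq_card => B.
by rewrite unfold_in inE /= inordK.
Qed.

Lemma card_sets : #|{: {set T}}| = (2 ^ #|T|)%N.
Proof.
rewrite -cardsT -card_powerset; apply: eq_card => B.
by rewrite powersetE subsetT.
Qed.

Lemma card_odd_sets : (0 < #|T|)%N -> (#|[set B : {set T} | odd #|B|]| * 2 = 2 ^ #|T|)%N.
Proof.
case/card_gt0P => a _.
pose flip (B : {set T}) : {set T} := if a \in B then B :\ a else a |: B.
have flipK : involutive flip.
  move=> B; rewrite /flip; case: (boolP (a \in B)) => aB.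
    by rewrite setD11 setD1K.
  by rewrite setU11 setU1K.
have odd_flip B : odd #|flip B| = ~~ odd #|B|.
  rewrite /flip; case: ifP => aB; last by rewrite cardsU1 aB.
  by rewrite -[in RHS](setD1K aB) cardsU1 !inE eqxx /= negbK.
set O := [set B : {set T} | odd #|B|].
have flipO : flip @: O = ~: O.
  apply/setP => B; rewrite !inE; apply/imsetP/idP => [[C] | oB].
    by rewrite inE => oC ->; rewrite odd_flip oC.
  by exists (flip B); rewrite ?flipK // inE odd_flip oB.
have := cardsC O; rewrite -flipO (card_imset _ (inv_inj flipK)) card_sets => <-.
by rewrite muln2 addnn.
Qed.

Lemma card_small_sets :
  (#|[set B : {set T} | (4 * #|B| < #|T|)%N]|)%:R <= (881 / 500 : R) ^+ #|T|.
Proof.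
(* Chernoff: a small B contributes y ^+ (#|T| - 4 * #|B|) >= 1 to
   y ^+ #|T| * (1 + y ^- 4) ^+ #|T|, where y = 5/4. *)
pose y : R := 5 / 4; pose z : R := (y ^+ 4)^-1.
have y_ge1 : 1 <= y by rewrite /y; lra.
have z_ge0 : 0 <= z by rewrite /z invr_ge0 exprn_ge0 // (le_trans ler01).
have -> : (881 / 500 : R) = y * (z + 1) by rewrite /z /y; field.
rewrite exprMn -sum_expr_card_sets mulr_sumr -sum1_card natr_sum.
rewrite [X in _ <= X](bigID (fun B : {set T} => B \in [set B : {set T} | (4 * #|B| < #|T|)%N])) /=.
rewrite -[X in X <= _]addr0; apply: lerD; last first.
  by apply: sumr_ge0 => B _; rewrite mulr_ge0 ?exprn_ge0 // (le_trans ler01).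
apply: ler_sum => B; rewrite inE => small_B.
have -> : y ^+ #|T| = y ^+ (#|T| - 4 * #|B|) * y ^+ (4 * #|B|).
  by rewrite -exprD subnK // ltnW.
rewrite -mulrA.
have -> : y ^+ (4 * #|B|) * z ^+ #|B| = 1.
  by rewrite exprM -exprMn /z mulfV ?expr1n // expf_neq0 // gt_eqF // (lt_le_trans ltr01).
by rewrite mulr1 exprn_ege1.
Qed.

Lemma card_small_sets_le (c : R) : c <= #|T|%:R ->
  (#|[set B : {set T} | (4 * #|B| < #|T|)%N]|)%:R <= 2 ^+ #|T| * expR (- (c / 10000%:R)).
Proof.
move=> c_le; apply: le_trans (card_small_sets) _.
pose e : R := expR (- 10000%:R^-1).
have e_ge : 1 - 10000%:R^-1 <= e by rewrite /e; have := expR_ge1Dx (- 10000%:R^-1 : R); lra.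
apply: (@le_trans _ _ ((2 * e) ^+ #|T|)).
  by apply: lerXn2r; rewrite ?nnegrE; lra.
rewrite exprMn ler_pM2l ?exprn_gt0 // /e -expRM_natl ler_expR mulrN lerN2.
by apply: ler_wpM2r; rewrite ?invr_ge0 ?ler0n.
Qed.

Lemma card_large_odd_sets (c : R) : (0 < #|T|)%N -> c <= #|T|%:R ->
  (1 - 2 * expR (- (c / 10000%:R))) * 2 ^+ (#|T| - 1) <=
  (#|[set B : {set T} | odd #|B| & (#|T| <= 4 * #|B|)%N]|)%:R.
Proof.
move=> T_gt0 c_le; have small_le := card_small_sets_le c_le.
set small := [set B : {set T} | _] in small_le; set e := expR _ in small_le *.
set O := [set B : {set T} | odd #|B|].
have O_le : (#|O| <= #|[set B : {set T} | odd #|B| & (#|T| <= 4 * #|B|)%N]| + #|small|)%N.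
  rewrite -(cardsID small O) addnC leq_add ?subset_leq_card ?subsetIr //.
  by apply/subsetP => B; rewrite !inE -leqNgt andbC.
have pow2 : (2 : R) ^+ #|T| = 2 * 2 ^+ (#|T| - 1) by rewrite -exprS subn1 prednK.
have O_eq : (#|O|%:R : R) = 2 ^+ (#|T| - 1).
  apply: (@mulIf _ 2); first by rewrite pnatr_eq0.
  by rewrite -natrM card_odd_sets // natrX mulrC -pow2.
move: O_le; rewrite -(ler_nat R) natrD O_eq; rewrite pow2 in small_le; lra.
Qed.

Lemma card_large_sets (c : R) : c <= #|T|%:R ->
  (1 - 2 * expR (- (c / 10000%:R))) * 2 ^+ #|T| <=
  (#|[set B : {set T} | (#|T| <= 4 * #|B|)%N]|)%:R.
Proof.
move=> c_le; have small_le := card_small_sets_le c_le.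
set small := [set B : {set T} | _] in small_le; set e := expR _ in small_le *.
have all_le : (2 ^ #|T| <= #|[set B : {set T} | (#|T| <= 4 * #|B|)%N]| + #|small|)%N.
  rewrite -card_sets -[#|{: {set T}}|]cardsT -(cardsID small setT) addnC.
  rewrite leq_add ?subset_leq_card ?subsetIr //.
  by apply/subsetP => B; rewrite !inE -leqNgt andbT.
have e_ge0 : 0 <= e by rewrite expR_ge0.
have pow2_ge0 : (0 : R) <= 2 ^+ #|T| by rewrite exprn_ge0.
move: all_le; rewrite -(ler_nat R) natrD natrX; nra.
Qed.

End SubsetCounting.

(* The constants in terms of D = d / (n + 2), m = n - 2 and the average
   E = (d - r) / m of the middle pi_i: d = (m + 4) D, c = 3.9 D, k = 2.3 D. *)
Lemma counter_point_real_bounds (R : realFieldType) (m D E r s : R) :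
  1 <= m -> 0 < D -> E * m = (m + 4) * D - r ->
  39/10 * D < r -> r < 11/10 * (39/10 * D) -> r <= 4 * s ->
  [/\ 2 * (101/100 * E) < 23/10 * D, 23/10 * D <= 2 * (99/100 * E) + s
    & r - s <= 39/10 * D].
Proof.
move=> m_ge1 D_gt0 Em r_gt r_lt r_le; split; last by lra.
- have : E * m < (11/10 * D) * m by nra.
  by rewrite ltr_pM2r; lra.
- suff : 23/10 * D * m <= (2 * (99/100 * E) + s) * m by rewrite ler_pM2r //; lra.
  nra.
Qed.

Lemma counter_point_bounds (R : realType) n d (p : point d) s :
  (2 < n)%N -> (0 < d)%N -> counter_point R n p -> (tau_ n 1 p <= 4 * s)%N ->
  [/\ forall x y, (1 < x < n)%N -> (1 < y < n)%N -> (pi_ x p + pi_ y p)%:R < kst R n d,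
      forall x y, (1 < x < n)%N -> (1 < y < n)%N -> kst R n d <= (pi_ x p + pi_ y p + s)%:R
    & forall u, (u + s)%N = tau_ n 1 p -> u%:R <= cst R n d].
Proof.
move=> n_gt2 d_gt0 [_ r_gt r_lt pi_mid] r_le.
set r := tau_ n 1 p in r_gt r_lt pi_mid r_le *.
set m : R := (n - 2)%N%:R in pi_mid; pose D : R := d%:R / (n + 2)%N%:R.
set E : R := (d%:R - r%:R) / m in pi_mid.
have m_ge1 : 1 <= m by rewrite /m ler1n; lia.
have D_gt0 : 0 < D by rewrite /D divr_gt0 ?ltr0n ?addn2.
have Em : E * m = (m + 4) * D - r%:R.
  rewrite /E divfK ?gt_eqF ?(lt_le_trans ltr01) //; congr (_ - _).
  rewrite /D /m -[4]/(4%N%:R : R) -natrD (_ : (n - 2 + 4 = n + 2)%N); last by lia.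
  by rewrite mulrC divfK // pnatr_eq0 addn2.
have r_le' : r%:R <= 4 * s%:R :> R by rewrite -[4]/(4%N%:R : R) -natrM ler_nat.
have cE : cst R n d = 39/10 * D by rewrite /cst /D mulrA.
have -> : kst R n d = 23/10 * D by rewrite /kst /D mulrA.
rewrite cE in r_gt r_lt *.
have [E_lt E_ge rs_le] := counter_point_real_bounds m_ge1 D_gt0 Em r_gt r_lt r_le'.
split.
- move=> x y /pi_mid[_ x_le] /pi_mid[_ y_le]; rewrite natrD; lra.
- move=> x y /pi_mid[x_ge _] /pi_mid[y_ge _]; rewrite !natrD; lra.
- move=> u us_eq; have : u%:R + s%:R = r%:R :> R by rewrite -natrD us_eq.
  lra.
Qed.

Lemma sum_nat_pred1 lo hi m : (\sum_(lo <= i < hi) (i == m : nat) = (lo <= m < hi))%N.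
Proof.
rewrite (eq_bigr (fun i => if i == m then 1 else 0)%N); last by move=> i _; case: (i == m).
rewrite -big_mkcond sum1_count count_uniq_mem ?iota_uniq // mem_iota.
by case: (leqP lo m) => //= ?; lia.
Qed.

Section InwardLines.
Variables (n d : nat) (p : point d).

Definition level (k : nat) : {set 'I_d} := [set j | p j == k%:Z].

Definition inward (T : {set 'I_d}) : dir d :=
  [ffun j => inord (if j \in T then (if p j == 1 then 2 else 0) else 1)].

Lemma inward_inj : injective inward.
Proof.
move=> T1 T2 /ffunP eqT; apply/setP => j; have /(congr1 val) := eqT j.
by rewrite !ffunE /= !inordK; case: (j \in T1); case: (j \in T2); case: (p j == 1).
Qed.

Lemma line_inwardE T t j : line_pt p (inward T) t j =
  if j \in T then (if p j == 1 then p j + t%:Z else p j - t%:Z) else p j.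
Proof.
rewrite !ffunE /dirval ffunE inordK; last by case: (j \in T); case: (p j == 1).
case: (j \in T); last by rewrite subrr mulr0 addr0.
by case: (p j == 1); rewrite /= ?mulr1 // mulrN1.
Qed.

Hypothesis n_gt1 : (1 < n)%N.

Lemma card_level1Un : #|level 1 :|: level n| = tau_ n 1 p.
Proof.
rewrite /tau_ subnK ?(ltnW n_gt1) // cardsU.
suff -> : level 1 :&: level n = set0 by rewrite cards0 subn0.
by apply/setP => j; rewrite !inE; apply/andP => -[/eqP -> /eqP]; lia.
Qed.

Variable T : {set 'I_d}.
Hypothesis T_ends : T \subset level 1 :|: level n.

Lemma card_inward_split : #|T| = (#|T :&: level 1| + #|T :&: level n|)%N.
Proof.
rewrite -(cardsID (level 1) T); congr (_ + _)%N; apply: eq_card => j; rewrite !inE.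
case: (boolP (j \in T)) => jT; rewrite ?andbF ?andbT //=.
have := subsetP T_ends j jT; rewrite !inE; case: eqP => //= ->.
by move=> _; apply/esym/negbTE/eqP; lia.
Qed.

Notation T1 := (T :&: level 1).
Notation Tn := (T :&: level n).
Notation q t := (line_pt p (inward T) t).

Lemma pi_line_inward t i : (t < n)%N ->
  (pi_ i (q t) + (i == 1%N) * #|T1| + (i == n) * #|Tn|
   = pi_ i p + (i == t.+1) * #|T1| + (i == n - t) * #|Tn|)%N.
Proof.
move=> t_lt.
have card_sum (X : {set 'I_d}) : #|X| = (\sum_j (j \in X : nat))%N.
  by rewrite -sum1_card big_mkcond; apply: eq_bigr => j _; case: (j \in X).
rewrite /pi_ !card_sum !big_distrr -!big_split /=; apply: eq_bigr => j _.
rewrite !inE line_inwardE; case: (boolP (j \in T)) => //= jT; last by rewrite !muln0 !addn0.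
have := subsetP T_ends j jT; rewrite !inE.
case: (boolP (p j == 1)) => [/eqP -> _ | _ /eqP ->] /=; lia.
Qed.

Lemma tau_line_inward t j : (t < n)%N -> (1 < j < n)%N ->
  tau_ n j (q t) = (tau_ n j p + ((j == t.+1) + (j == n - t)) * #|T|)%N.
Proof.
move=> t_lt j_mid; rewrite /tau_ card_inward_split.
have := pi_line_inward j t_lt; have := pi_line_inward (n - j + 1) t_lt; lia.
Qed.

Lemma tau1_line_inward t : (0 < t)%N -> (t.+1 < n)%N ->
  (tau_ n 1 (q t) + #|T|)%N = tau_ n 1 p.
Proof.
move=> t_gt0 t_lt; rewrite /tau_ subnK ?(ltnW n_gt1) // card_inward_split.
have := pi_line_inward 1 (ltnW t_lt); have := pi_line_inward n (ltnW t_lt); lia.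
Qed.

Lemma sigma_line_inward t : (t < n)%N ->
  (sigma_ n (q t) + #|T1| = sigma_ n p + (t.+1 <= n./2) * #|T1| + (n - t <= n./2) * #|Tn|)%N.
Proof.
move=> t_lt.
have : (\sum_(1 <= i < (n./2).+1) (pi_ i (q t) + (i == 1%N) * #|T1| + (i == n) * #|Tn|)
   = \sum_(1 <= i < (n./2).+1) (pi_ i p + (i == t.+1) * #|T1| + (i == n - t) * #|Tn|))%N.
  by apply: eq_bigr => i _; exact: pi_line_inward.
rewrite !big_split -!big_distrl /= !sum_nat_pred1 /sigma_; lia.
Qed.

Lemma odd_sigma_line_inward t : (t < n)%N -> odd #|T| -> t.+1 != (n - t)%N ->
  odd (sigma_ n (q t)) = odd (sigma_ n p) (+) (uphalf n < t.+1)%N.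
Proof.
move=> t_lt T_odd /eqP t_mid; have := sigma_line_inward t_lt.
rewrite card_inward_split oddD in T_odd; rewrite uphalfE.
case: (leqP t.+1 n.+1./2) => t_half sigma_eq.
  by rewrite addbF; congr odd; lia.
have /(congr1 odd) : (sigma_ n (q t) + #|T1| = sigma_ n p + #|Tn|)%N by lia.
rewrite !oddD addbT => odd_eq.
by rewrite -(addbK (odd #|T1|) (odd (sigma_ n (q t)))) odd_eq -addbA (addbC (odd #|Tn|)) T_odd addbT.
Qed.

Lemma in_grid_line_inward t : in_grid n p -> (t < n)%N -> in_grid n (q t).
Proof.
move=> /forallP p_grid t_lt; apply/forallP => j; rewrite line_inwardE.
case: (boolP (j \in T)) => // jT; have := p_grid j.
by have := subsetP T_ends j jT; rewrite !inE; case: eqP => [-> | _ /= /eqP ->] _; lia.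
Qed.

Lemma counter_point_line_end (R : realType) :
  counter_point R n p -> counter_point R n (q n.-1).
Proof.
have t_lt : (n.-1 < n)%N by lia.
have tau1_eq : tau_ n 1 (q n.-1) = tau_ n 1 p.
  rewrite /tau_ subnK ?(ltnW n_gt1) //.
  have := pi_line_inward 1 t_lt; have := pi_line_inward n t_lt; lia.
have pi_eq i : (1 < i < n)%N -> pi_ i (q n.-1) = pi_ i p.
  by have := pi_line_inward i t_lt; lia.
case=> p_grid tau1_gt tau1_lt pi_mid; split; rewrite ?tau1_eq //.
  exact: in_grid_line_inward.
by move=> i i_mid; rewrite pi_eq //; exact: pi_mid.
Qed.

End InwardLines.

Lemma counter_point_tau1_gt0 (R : realType) n d (p : point d) :
  counter_point R n p -> (0 < tau_ n 1 p)%N.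
Proof.
case=> _ c_lt _ _; rewrite -(ltr0n R); apply: le_lt_trans c_lt.
by rewrite /cst !mulr_ge0 ?invr_ge0 ?ler0n.
Qed.

Section GridLines.
Variables (R : realType) (S : eqType) (x0 : S) (w : seq S) (n d : nat).
Variables (G : point d -> S) (p : point d) (T : {set 'I_d}).
Hypotheses (n_gt2 : (2 < n)%N) (d_gt0 : (0 < d)%N) (G_rules : Gw_rules R x0 w n G).
Hypotheses (p_counter : counter_point R n p) (T_ends : T \subset level p 1 :|: level p n).
Hypothesis T_large : (tau_ n 1 p <= 4 * #|T|)%N.

Notation q t := (line_pt p (inward p T) t).

Let n_gt1 : (1 < n)%N. Proof. by lia. Qed.

Lemma Gw_line_inward t : (t < n)%N ->
  let i := minn t.+1 (n - t) in
  G (q t) = if odd (sigma_ n (q t)) then letter x0 w i else letter x0 w (n - i + 1).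
Proof.
move=> t_lt i; have [p_grid _ _ _] := p_counter.
have [rule_odd1 rule_odd rule_even1 rule_even] :=
  G_rules (in_grid_line_inward n_gt1 T_ends p_grid t_lt).
case: (boolP ((0 < t) && (t.+1 < n))%N) => [/andP[t_gt0 t_lt'] | t_end].
- have [pi_lt_k k_le tau1_le] := counter_point_bounds n_gt2 d_gt0 p_counter T_large.
  have i_range : (1 < i <= uphalf n)%N by rewrite uphalfE; lia.
  have tau1_q : (tau_ n 1 (q t))%:R <= cst R n d by apply: tau1_le; exact: tau1_line_inward.
  have k_le_i : kst R n d <= (tau_ n i (q t))%:R.
    rewrite (tau_line_inward n_gt1 T_ends t_lt); last by rewrite uphalfE in i_range; lia.
    apply: le_trans (k_le i (n - i + 1)%N _ _) _; try lia.
    by rewrite ler_nat /tau_; lia.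
  have i_unique j : (1 < j <= uphalf n)%N -> kst R n d <= (tau_ n j (q t))%:R -> j = i.
    rewrite uphalfE => j_range k_le_j; apply/eqP; apply: contraTT k_le_j => j_ne.
    rewrite -ltNge (tau_line_inward n_gt1 T_ends t_lt); last by lia.
    have -> : ((j == t.+1) + (j == n - t))%N = 0%N by lia.
    by rewrite mul0n addn0; apply: pi_lt_k; lia.
  by case: (boolP (odd (sigma_ n (q t)))) => odd_sigma; [apply: rule_odd | apply: rule_even].
- have q_counter : counter_point R n (q t).
    have [-> | ->] : t = 0%N \/ t = n.-1 by lia.
      by rewrite (_ : q 0 = p) //; apply/ffunP => j; rewrite ffunE mul0r addr0.
    exact: counter_point_line_end.
  have -> : i = 1%N by rewrite /i; lia.
  rewrite subnK ?(ltnW n_gt1) //.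
  by case: (boolP (odd (sigma_ n (q t)))) => odd_sigma; [apply: rule_odd1 | apply: rule_even1].
Qed.

Lemma Gw_line_inward_odd t : odd #|T| -> (t < n)%N ->
  G (q t) = if odd (sigma_ n p) then letter x0 w t.+1 else letter x0 w (n - t).
Proof.
move=> T_odd t_lt; rewrite Gw_line_inward //=.
case: (eqVneq t.+1 (n - t)%N) => [t_mid | t_side].
  rewrite -t_mid minnn.
  have -> : (n - t.+1 + 1 = t.+1)%N by lia.
  by rewrite !if_same.
rewrite odd_sigma_line_inward // uphalfE.
case: (leqP t.+1 n.+1./2) => t_half; rewrite ?addbF ?addbT.
  have -> : minn t.+1 (n - t) = t.+1 by lia.
  by have -> : (n - t.+1 + 1 = n - t)%N by lia.
have -> : minn t.+1 (n - t) = (n - t)%N by lia.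
have -> : (n - (n - t) + 1 = t.+1)%N by lia.
by case: (odd (sigma_ n p)).
Qed.

Lemma Gw_line_inward_palindrome t :
    (forall i, (1 <= i <= n)%N -> letter x0 w i = letter x0 w (n - i + 1)) -> (t < n)%N ->
  G (q t) = letter x0 w t.+1.
Proof.
move=> w_pal t_lt; rewrite Gw_line_inward //=.
have w_mirror : letter x0 w (n - t) = letter x0 w t.+1.
  by rewrite w_pal; [congr letter; lia | lia].
have [-> | ->] : (minn t.+1 (n - t) = t.+1 \/ minn t.+1 (n - t) = n - t)%N by lia.
  have -> : (n - t.+1 + 1 = n - t)%N by lia.
  by rewrite w_mirror !if_same.
have -> : (n - (n - t) + 1 = t.+1)%N by lia.
by rewrite w_mirror !if_same.
Qed.

Lemma inward_good_dir : size w = n -> (0 < #|T|)%N ->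
    odd #|T| \/ (forall i, (1 <= i <= n)%N -> letter x0 w i = letter x0 w (n - i + 1)) ->
  inward p T \in good_dirs n G w p.
Proof.
move=> size_w T_gt0 T_odd_or_w_pal; rewrite inE; apply/and3P; split.
- have /set0Pn[j jT] : T != set0 by rewrite -card_gt0.
  apply/forallPn; exists j; rewrite /dirval ffunE jT inordK; last by case: (p j == 1).
  by case: (p j == 1).
- apply/allP => t; rewrite mem_iota => /andP[_ t_lt].
  by apply: in_grid_line_inward; case: p_counter.
set u := [seq _ | t <- _].
have size_u : size u = n by rewrite size_map size_iota.
have nth_u t : (t < n)%N -> nth x0 u t = G (q t).
  by move=> t_lt; rewrite (nth_map 0%N) ?size_iota // nth_iota.
case: T_odd_or_w_pal => [T_odd | w_pal].
  apply/orP; case: (boolP (odd (sigma_ n p))) => odd_p; [left | right];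
    apply/eqP/(eq_from_nth (x0 := x0)); rewrite ?size_rev size_u // => t t_lt;
    rewrite nth_u // Gw_line_inward_odd // ?(negbTE odd_p) ?odd_p //.
  by rewrite nth_rev ?size_w // /letter; congr nth; lia.
apply/orP; left; apply/eqP/(eq_from_nth (x0 := x0)); rewrite size_u // => t t_lt.
by rewrite nth_u // Gw_line_inward_palindrome.
Qed.

End GridLines.

Section GoodDirections.
Variables (R : realType) (S : eqType) (x0 : S) (w : seq S) (n d : nat).
Variables (G : point d -> S) (p : point d).
Hypotheses (n_gt2 : (2 < n)%N) (d_gt0 : (0 < d)%N) (size_w : size w = n).
Hypotheses (G_rules : Gw_rules R x0 w n G) (p_counter : counter_point R n p).

Notation A := (level p 1 :|: level p n).

Lemma card_good_dirs_ge (X : {set {set 'I_#|A|}}) :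
    (forall B, B \in X -> (tau_ n 1 p <= 4 * #|B|)%N /\
      (odd #|B| \/ forall i, (1 <= i <= n)%N -> letter x0 w i = letter x0 w (n - i + 1))) ->
  (#|X| <= #|good_dirs n G w p|)%N.
Proof.
move=> X_good; have e_inj := @enum_val_inj _ (mem A).
have dir_inj : injective (fun B : {set 'I_#|A|} => inward p (@enum_val _ (mem A) @: B)).
  by move=> B1 B2 /inward_inj/imset_inj; apply.
rewrite -(card_imset X dir_inj); apply/subset_leq_card/subsetP.
move=> _ /imsetP[B /X_good[B_large B_odd_or_w_pal] ->].
have B_gt0 : (0 < #|B|)%N by have := counter_point_tau1_gt0 p_counter; lia.
rewrite -(card_imset B e_inj) in B_large B_gt0 B_odd_or_w_pal.
apply: (inward_good_dir n_gt2 d_gt0 G_rules p_counter) => //.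
by apply/subsetP => _ /imsetP[i _ ->]; exact: enum_valP.
Qed.

End GoodDirections.

Unset Implicit Arguments.

Theorem lemma21 (R : realType) (S : eqType) (x0 : S) (n d : nat) (w : seq S)
    (G : point d -> S) (p : point d) :
  (3 <= n)%N -> (1 <= d)%N -> size w = n ->
  Gw_rules R x0 w n G ->
  counter_point R n p ->
  let r := tau_ n 1 p in
  let N : R := (#|good_dirs n G w p|)%:R in
  (1 - 2 * expR (- (cst R n d / 10000%:R))) * 2 ^+ (r - 1)%N <= N /\
  ((forall i : nat, (1 <= i <= n)%N -> letter x0 w i = letter x0 w (n - i + 1)) ->
   (1 - 2 * expR (- (cst R n d / 10000%:R))) * 2 ^+ r <= N).
Proof.
move=> n_gt2 d_gt0 size_w G_rules p_counter r N.
set A := level p 1 :|: level p n.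
have card_A : #|'I_#|A| | = r by rewrite card_ord card_level1Un //; lia.
have [_ c_lt _ _] := p_counter; rewrite -/r -card_A in c_lt *.
have A_gt0 : (0 < #|'I_#|A| |)%N by rewrite card_A; exact: counter_point_tau1_gt0 p_counter.
split.
- apply: le_trans (card_large_odd_sets A_gt0 (ltW c_lt)) _.
  rewrite ler_nat; apply: (card_good_dirs_ge n_gt2 d_gt0 size_w G_rules p_counter) => B.
  by rewrite inE card_A => /andP[B_odd B_large]; split; [|left].
- move=> w_pal; apply: le_trans (card_large_sets (ltW c_lt)) _.
  rewrite ler_nat; apply: (card_good_dirs_ge n_gt2 d_gt0 size_w G_rules p_counter) => B.
  by rewrite inE card_A => B_large; split; [|right].
Qed.
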